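(* Let $(V,q)$ be a Minkowski space whose dimension is greater than $3$. Let $a,b,c$ be pairwise non-collinear vectors in $\mathcal{C}(0)$. Then there exists $d\in V\setminus\mathcal{C}(0)$ such that $q(d-a)=q(d-b)=q(d-c)=0$.
   Context: A Minkowski space is a pair $(V,q)$ where $V$ is a finite-dimensional real vector space of dimension $n>1$ and $q$ is a quadratic form on $V$ of signature $(1,n-1)$. $\mathcal{C}(0)=\{m\in V: q(m)=0\}$. *)

From mathcomp Require Import all_boot all_order all_algebra.
From mathcomp Require Import reals.
Set Implicit Arguments. Unset Strict Implicit. Unset Printing Implicit Defensive.
Import Order.TTheory GRing.Theory Num.Theory.
Local Open Scope ring_scope.

(* The finite-dimensional real vector space V of dimension n is modelled as
   row vectors 'rV[R]_n; a quadratic form on it is given by a symmetric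
   matrix A, via q_A(x) = x A x^T. *)
Definition qform (R : realType) (n : nat) (A : 'M[R]_n) (x : 'rV[R]_n) : R :=
  (x *m A *m x^T) 0 0.

Definition minkowski_diag (R : realType) (n : nat) : 'M[R]_n :=
  \matrix_(i, j) ((i == j)%:R * (if (i : nat) == 0%N then 1 else -1)).

Definition signature_1_nm1 (R : realType) (n : nat) (A : 'M[R]_n) : Prop :=
  A^T = A /\ exists P : 'M[R]_n, P \in unitmx /\ P *m A *m P^T = minkowski_diag R n.

Definition light_cone (R : realType) (n : nat) (A : 'M[R]_n) (m : 'rV[R]_n) : Prop :=
  qform A m = 0.

Definition collinear (R : realType) (n : nat) (u v : 'rV[R]_n) : Prop :=
  exists s t : R, (s != 0 \/ t != 0) /\ s *: u + t *: v = 0.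

(* For a null vector v, q(d - v) = q(d) - 2 B(d,v); hence d := (2 / q f) f
   solves the problem for any f with q f != 0 and B(f,a) = B(f,b) = B(f,c) = 1.
   Orthogonal null vectors of a form of signature (1, n-1) are collinear, so
   the pairings of a, b, c are nonzero and their Gram system is solvable by
   some e in their span. As n > 3 some w != 0 is orthogonal to a, b, c; it is
   not null, so q(e + t w) = q e + t^2 q w is nonzero for t = 0 or t = 1. *)
From mathcomp Require Import all_boot all_order all_algebra.
From mathcomp Require Import reals ring.
Import GRing.Theory Num.Theory.
Set Implicit Arguments.
Unset Strict Implicit.
Unset Printing Implicit Defensive.

Local Open Scope ring_scope.

Section BilinearForm.
Variables (R : comPzRingType) (n : nat) (A : 'M[R]_n).

Definition bform (u v : 'rV[R]_n) : R := (u *m A *m v^T) 0 0.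

Lemma bformDl u v w : bform (u + v) w = bform u w + bform v w.
Proof. by rewrite /bform !mulmxDl mxE. Qed.

Lemma bformZl s u w : bform (s *: u) w = s * bform u w.
Proof. by rewrite /bform -!scalemxAl mxE. Qed.

Lemma bformNl u w : bform (- u) w = - bform u w.
Proof. by rewrite -scaleN1r bformZl mulN1r. Qed.

Hypothesis symA : A^T = A.

Lemma bformC u v : bform u v = bform v u.
Proof.
rewrite /bform; transitivity ((u *m A *m v^T)^T 0 0); first by rewrite [RHS]mxE.
by rewrite !trmx_mul trmxK symA mulmxA.
Qed.

Lemma bformDr u v w : bform w (u + v) = bform w u + bform w v.
Proof. by rewrite !(bformC w) bformDl. Qed.

Lemma bformZr s u w : bform w (s *: u) = s * bform w u.
Proof. by rewrite !(bformC w) bformZl. Qed.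

Lemma bformNr u w : bform w (- u) = - bform w u.
Proof. by rewrite !(bformC w) bformNl. Qed.

End BilinearForm.

Lemma bform_mulmx (R : comPzRingType) n (A P : 'M[R]_n) u v :
  bform A (u *m P) (v *m P) = bform (P *m A *m P^T) u v.
Proof. by rewrite /bform trmx_mul !mulmxA. Qed.

Lemma qformE (R : realType) n (A : 'M[R]_n) u : qform A u = bform A u u.
Proof. by []. Qed.

Lemma qformD (R : realType) n (A : 'M[R]_n) u v : A^T = A ->
  qform A (u + v) = qform A u + 2 * bform A u v + qform A v.
Proof.
move=> symA; rewrite !qformE bformDl !bformDr // (bformC symA v u); ring.
Qed.

Lemma qformB (R : realType) n (A : 'M[R]_n) u v : A^T = A ->
  qform A (u - v) = qform A u - 2 * bform A u v + qform A v.
Proof.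
move=> symA; rewrite qformD // !qformE bformNl bformNr // bformNr // opprK.
by rewrite mulrN.
Qed.

Lemma qformZ (R : realType) n (A : 'M[R]_n) s u :
  A^T = A -> qform A (s *: u) = s ^+ 2 * qform A u.
Proof. by move=> symA; rewrite !qformE bformZl bformZr // mulrA -expr2. Qed.

Section MinkowskiDiag.
Variables (R : realType) (n : nat) (i0 : 'I_n).
Hypothesis i0_eq0 : (i0 : nat) = 0%N.
Local Notation J := (minkowski_diag R n).

Lemma minkowski_diag_sym : J^T = J.
Proof.
apply/matrixP => i j; rewrite !mxE.
by have [-> // | _] := eqVneq i j; rewrite !mul0r.
Qed.

Lemma qform_minkowski_diag u :
  qform J u = u 0 i0 ^+ 2 - \sum_(j | j != i0) u 0 j ^+ 2.
Proof.
rewrite /qform mxE (bigD1 i0) //= -sumrN; congr (_ + _); last first.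
  apply: eq_bigr => j neq_j; rewrite mxE (bigD1 j) //= big1 => [|k /negbTE nkj].
    rewrite !mxE eqxx mul1r addr0 -(inj_eq val_inj) /= i0_eq0 in neq_j *.
    by rewrite (negbTE neq_j) expr2 mulrN1 mulNr.
  by rewrite mxE nkj mul0r mulr0.
rewrite mxE (bigD1 i0) //= big1 => [|k /negbTE nki]; last first.
  by rewrite mxE nki mul0r mulr0.
by rewrite !mxE eqxx i0_eq0 eqxx !mulr1 addr0 expr2.
Qed.

Lemma minkowski_null_time0 w : qform J w = 0 -> w 0 i0 = 0 -> w = 0.
Proof.
rewrite qform_minkowski_diag => + w0; rewrite w0 expr0n sub0r => /eqP.
rewrite oppr_eq0 => /eqP sum0.
apply/rowP => j; rewrite mxE; have [-> // | neq_j] := eqVneq j i0.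
apply/eqP; rewrite -sqrf_eq0; apply/eqP.
exact: (psumr_eq0P (fun k _ => sqr_ge0 (w 0 k)) sum0).
Qed.

Lemma minkowski_orthogonal_null_collinear u v :
  qform J u = 0 -> qform J v = 0 -> bform J u v = 0 -> collinear u v.
Proof.
move=> qu qv uv.
have w0 : v 0 i0 *: u - u 0 i0 *: v = 0.
  apply: minkowski_null_time0; last by rewrite !mxE mulrC subrr.
  by rewrite qformB ?minkowski_diag_sym // !qformZ ?minkowski_diag_sym //
    bformZl bformZr ?minkowski_diag_sym // qu qv uv !mulr0 subrr addr0.
have [u0 | nu0] := eqVneq (u 0 i0) 0; last first.
  by exists (v 0 i0), (- u 0 i0); rewrite oppr_eq0 scaleNr; split; [right|].
have [v0 | nv0] := eqVneq (v 0 i0) 0; last first.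
  by exists (v 0 i0), (- u 0 i0); rewrite scaleNr; split; [left|].
exists 1, 0; rewrite oner_neq0 (minkowski_null_time0 qu u0).
by rewrite scaler0 scale0r addr0; split; [left|].
Qed.

End MinkowskiDiag.

Lemma orthogonal_null_collinear (R : realType) n (A : 'M[R]_n) u v :
  (0 < n)%N -> signature_1_nm1 A ->
  qform A u = 0 -> qform A v = 0 -> bform A u v = 0 -> collinear u v.
Proof.
move=> n_gt0 [_ [P [unitP APJ]]] qu qv uv.
have eP (w : 'rV[R]_n) : w = (w *m invmx P) *m P by rewrite mulmxKV.
have [s [t [st0 comb0]]] : collinear (u *m invmx P) (v *m invmx P).
  apply: (@minkowski_orthogonal_null_collinear _ _ (Ordinal n_gt0)) => //;
    by rewrite ?qformE -APJ -bform_mulmx -!eP.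
exists s, t; split => //.
by rewrite [u]eP [v]eP !(scalemxAl _ _ P) -mulmxDl comb0 mul0mx.
Qed.

Lemma null_noncollinear_bform_neq0 (R : realType) n (A : 'M[R]_n) u v :
  (0 < n)%N -> signature_1_nm1 A ->
  light_cone A u -> light_cone A v -> ~ collinear u v -> bform A u v != 0.
Proof.
move=> n_gt0 sigA qu qv ncol; apply/eqP => uv; apply: ncol.
exact: orthogonal_null_collinear uv.
Qed.

Lemma exists_nonzero_orthogonal3 (F : fieldType) n (A : 'M[F]_n) (a b c : 'rV[F]_n) :
  (3 < n)%N ->
  exists2 w, w != 0 & [/\ bform A w a = 0, bform A w b = 0 & bform A w c = 0].
Proof.
move=> n_gt3; set N := A *m (col_mx a (col_mx b c))^T.
have /rowV0Pn [w /sub_kermxP wN w_neq0] : kermx N != 0.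
  rewrite -mxrank_eq0 mxrank_ker subn_eq0 -ltnNge.
  exact: leq_ltn_trans (rank_leq_col N) n_gt3.
exists w => //; move/eqP: wN; rewrite /N mulmxA !tr_col_mx !mul_mx_row.
by rewrite !row_mx_eq0 => /and3P[/eqP wa /eqP wb /eqP wc]; rewrite /bform wa wb wc !mxE.
Qed.

Lemma orthogonal_nonnull (R : realType) n (A : 'M[R]_n) (a b w : 'rV[R]_n) :
  (0 < n)%N -> signature_1_nm1 A -> light_cone A a -> bform A a b != 0 ->
  w != 0 -> bform A w a = 0 -> bform A w b = 0 -> qform A w != 0.
Proof.
move=> n_gt0 sigA qa ab_neq0 w_neq0 wa wb; apply/eqP => qw.
have [s [t [st0 comb0]]] := orthogonal_null_collinear n_gt0 sigA qw qa wa.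
have /eqP : bform A (s *: w + t *: a) b = 0 by rewrite comb0 /bform !mul0mx mxE.
rewrite bformDl !bformZl wb mulr0 add0r mulf_eq0 (negbTE ab_neq0) orbF => /eqP t0.
move: comb0 st0; rewrite t0 scale0r addr0 eqxx => /eqP.
by rewrite scaler_eq0 (negbTE w_neq0) orbF => /eqP ->; rewrite eqxx; case.
Qed.

Lemma exists_unit_pairing (F : numFieldType) n (A : 'M[F]_n) (a b c : 'rV[F]_n) :
  A^T = A -> bform A a a = 0 -> bform A b b = 0 -> bform A c c = 0 ->
  bform A b c != 0 -> bform A a c != 0 -> bform A a b != 0 ->
  exists2 e, [/\ bform A e a = 1, bform A e b = 1 & bform A e c = 1] &
    forall w, bform A w a = 0 -> bform A w b = 0 -> bform A w c = 0 ->
      bform A e w = 0.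
Proof.
move=> symA aa bb cc x_neq0 y_neq0 z_neq0.
set x := bform A b c in x_neq0 *; set y := bform A a c in y_neq0 *.
set z := bform A a b in z_neq0 *.
have ba : bform A b a = z by rewrite bformC.
have ca : bform A c a = y by rewrite bformC.
have cb : bform A c b = x by rewrite bformC.
(* Solution of the Gram system [[0,z,y],[z,0,x],[y,x,0]], of determinant 2xyz. *)
pose D := 2 * x * y * z.
exists (x * (y + z - x) / D *: a + y * (x - y + z) / D *: b
        + z * (x + y - z) / D *: c).
  by rewrite !bformDl !bformZl aa bb cc ba ca cb -/x -/y -/z /D;
    split; field; rewrite x_neq0 y_neq0 z_neq0.
move=> w wa wb wc.
by rewrite bformC // !bformDr // !bformZr // wa wb wc !mulr0 !addr0.
Qed.

Lemma exists_nonnull_unit_pairing (R : realType) n (A : 'M[R]_n) (a b c : 'rV[R]_n) :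
  (3 < n)%N -> signature_1_nm1 A ->
  light_cone A a -> light_cone A b -> light_cone A c ->
  ~ collinear a b -> ~ collinear b c -> ~ collinear a c ->
  exists f, [/\ qform A f != 0, bform A f a = 1, bform A f b = 1 & bform A f c = 1].
Proof.
move=> n_gt3 sigA qa qb qc nab nbc nac.
have symA : A^T = A by case: sigA.
have n_gt0 : (0 < n)%N by apply: leq_trans n_gt3.
have ab := null_noncollinear_bform_neq0 n_gt0 sigA qa qb nab.
have [e [ea eb ec] e_orth] := exists_unit_pairing symA qa qb qc
  (null_noncollinear_bform_neq0 n_gt0 sigA qb qc nbc)
  (null_noncollinear_bform_neq0 n_gt0 sigA qa qc nac) ab.
have [w w_neq0 [wa wb wc]] := exists_nonzero_orthogonal3 A a b c n_gt3.
have qw := orthogonal_nonnull n_gt0 sigA qa ab w_neq0 wa wb.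
pose t : R := if qform A e == 0 then 1 else 0.
have pair1 v : bform A w v = 0 -> bform A e v = 1 -> bform A (e + t *: w) v = 1.
  by move=> wv ev; rewrite bformDl bformZl wv mulr0 addr0.
exists (e + t *: w); split; [|exact: pair1..].
rewrite qformD // qformZ // bformZr // e_orth // mulr0 mulr0 addr0 /t.
by have [-> | qe] := eqVneq (qform A e) 0;
  rewrite ?expr1n ?mul1r ?add0r // expr0n mul0r addr0.
Qed.

Lemma qform_sub_null_eq0 (R : realType) n (A : 'M[R]_n) (f v : 'rV[R]_n) :
  A^T = A -> qform A f != 0 -> bform A f v = 1 -> light_cone A v ->
  qform A ((2 / qform A f) *: f - v) = 0.
Proof.
move=> symA qf fv qv; rewrite qformB // qformZ // bformZl fv qv.
by field.
Qed.

Theorem lemma2p4 (R : realType) (n : nat) (A : 'M[R]_n)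
  (hn : (3 < n)%N) (hsig : signature_1_nm1 A)
  (a b c : 'rV[R]_n)
  (ha : light_cone A a) (hb : light_cone A b) (hc : light_cone A c)
  (hab : ~ collinear a b) (hbc : ~ collinear b c) (hac : ~ collinear a c) :
  exists d : 'rV[R]_n, ~ light_cone A d /\
    qform A (d - a) = 0 /\ qform A (d - b) = 0 /\ qform A (d - c) = 0.
Proof.
have symA : A^T = A by case: hsig.
have [f [qf fa fb fc]] := exists_nonnull_unit_pairing hn hsig ha hb hc hab hbc hac.
exists ((2 / qform A f) *: f); split; last by split; [|split];
  apply: qform_sub_null_eq0.
rewrite /light_cone qformZ // => /eqP.
by rewrite mulf_eq0 expf_eq0 /= mulf_eq0 invr_eq0 (negbTE qf) pnatr_eq0 !orbF.
Qed.
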